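(* Let $(X,\mathcal R)$ and $(Y,\mathcal S)$ be exactly triply regular symmetric $d$-class association schemes having the same Delta–Wye parameters with respect to orderings $A_0,\dots,A_d$, $A'_0,\dots,A'_d$ of their adjacency matrices and $E_0,\dots,E_d$, $E'_0,\dots,E'_d$ of their primitive idempotents. Then, under these orderings, the two schemes have the same intersection numbers $p_{ij}^k$, the same eigenvalues $P_{ji}$, the same dual eigenvalues $Q_{ji}$ and the same Krein parameters $q_{ij}^k$. Moreover the linear map $\kappa:\mathbb A\to\mathbb A'$ defined by $\kappa(A_i)=A'_i$ ($0\le i\le d$) satisfies $\kappa(MN)=\kappa(M)\kappa(N)$ and $\kappa(M\circ N)=\kappa(M)\circ\kappa(N)$ for all $M,N\in\mathbb A$, and $\kappa(E_j)=E'_j$ for all $j$.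
   Context: A symmetric $d$-class association scheme $(X,\mathcal R)$ consists of a finite nonempty set $X$ and a partition $\mathcal R=\{R_0,\dots,R_d\}$ of $X\times X$ into nonempty symmetric relations, with $R_0=\{(x,x):x\in X\}$, such that for all $i,j,k$ the number $p_{ij}^k=|\{z\in X:(x,z)\in R_i,(z,y)\in R_j\}|$ (the intersection numbers) does not depend on the choice of $(x,y)\in R_k$. The adjacency matrix $A_i\in\mathrm{Mat}_X(\mathbb C)$ is the $0/1$ matrix of $R_i$. The Bose–Mesner algebra $\mathbb A=\mathrm{span}\{A_0,\dots,A_d\}$ is commutative and closed under ordinary matrix product and under the entrywise (Schur) product $\circ$; it has a second basis of primitive idempotents $E_0,\dots,E_d$ (symmetric, $E_iE_j=\delta_{ij}E_i$, $\sum_j E_j=I$). Eigenvalues $P_{ji}$ and dual eigenvalues $Q_{ji}$ are defined by $A_i=\sum_j P_{ji}E_j$ and $E_i=|X|^{-1}\sum_j Q_{ji}A_j$, and Krein parameters $q_{ij}^k$ by $E_i\circ E_j=|X|^{-1}\sum_k q_{ij}^kE_k$. $\mathbb A'$ denotes the Bose–Mesner algebra of $(Y,\mathcal S)$. For $L,M,N\in\mathrm{Mat}_X(\mathbb C)$ define tensors in $(\mathbb C^X)^{\otimes 3}$: $\Delta(L,M,N)=\sum_{x,y,z\in X}L_{xz}M_{xy}N_{yz}\,\hat x\otimes\hat y\otimes\hat z$ and $\Upsilon(L,M,N)=\sum_{x,y,z,u\in X}L_{xu}M_{yu}N_{zu}\,\hat x\otimes\hat y\otimes\hat z$. Let $\Delta(\mathbb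 A)$ and $\Upsilon(\mathbb A)$ be the spans of all $\Delta(L,M,N)$, resp. $\Upsilon(L,M,N)$, with $L,M,N\in\mathbb A$. The scheme is triply regular if $\Upsilon(\mathbb A)\subseteq\Delta(\mathbb A)$, dually triply regular if $\Delta(\mathbb A)\subseteq\Upsilon(\mathbb A)$, and exactly triply regular if both hold. It is known that the tensors $\Upsilon(E_r,E_s,E_t)$ with $q_{rs}^t>0$ form a basis of $\Upsilon(\mathbb A)$. Delta–Wye parameters: if the scheme is exactly triply regular, then for each $i,j,k\in\{0,\dots,d\}$ there are unique scalars $\sigma^{i,j,k}_{r,s,t}$ ($r,s,t$ with $q_{rs}^t>0$; set $\sigma^{i,j,k}_{r,s,t}=0$ when $q_{rs}^t=0$) such that $\Delta(A_i,A_j,A_k)=\sum_{q_{rs}^t>0}\sigma^{i,j,k}_{r,s,t}\,\Upsilon(E_r,E_s,E_t)$. Two exactly triply regular $d$-class schemes $(X,\mathcal R)$, $(Y,\mathcal S)$ have the same Delta–Wye parameters if there are orderings $A_0,\dots,A_d$ and $A'_0,\dots,A'_d$ of their adjacency matrices and $E_0,\dots,E_d$ and $E'_0,\dots,E'_d$ of their primitive idempotents such that $\sigma^{i,j,k}_{r,s,t}$ computed in $(X,\mathcal R)$ equals the corresponding $\sigma^{i,j,k}_{r,s,t}$ computed in $(Y,\mathcal S)$ for all $i,j,k,r,s,t\in\{0,\dots,d\}$. *)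

From mathcomp Require Import all_boot all_order all_algebra all_field.
Set Implicit Arguments. Unset Strict Implicit. Unset Printing Implicit Defensive.
Import GRing.Theory Num.Theory.
Local Open Scope ring_scope.

(* A scheme on the finite set X = 'I_n with classes indexed by 'I_d.+1 is given
   by its "class function" R : X -> X -> 'I_d.+1, (x,y) \in R_i <-> R x y = i.
   The labelling of the classes is the chosen ordering A_0,...,A_d. *)

Definition adj n d (R : 'I_n -> 'I_n -> 'I_d.+1) (i : 'I_d.+1) : 'M[algC]_n :=
  \matrix_(x, y) (R x y == i)%:R.

Definition schur n (M N : 'M[algC]_n) : 'M[algC]_n := \matrix_(x, y) (M x y * N x y).

(* symmetric d-class association scheme (the diagonal relation is one of the
   classes; which label it carries is part of the chosen ordering) *)
Definition is_symm_scheme n d (R : 'I_n -> 'I_n -> 'I_d.+1) : Prop :=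
  [/\ exists i0 : 'I_d.+1, forall x y, (R x y == i0) = (x == y),
      forall x y, R x y = R y x,
      forall i : 'I_d.+1, exists x y, R x y = i &
      forall (i j k : 'I_d.+1) (x y x' y' : 'I_n), R x y = k -> R x' y' = k ->
        #|[set z | (R x z == i) && (R z y == j)]| =
        #|[set z | (R x' z == i) && (R z y' == j)]| ].

Definition inBM n d (R : 'I_n -> 'I_n -> 'I_d.+1) (M : 'M[algC]_n) : Prop :=
  exists c : 'I_d.+1 -> algC, M = \sum_i c i *: adj R i.

Definition prim_idem_ordering n d (R : 'I_n -> 'I_n -> 'I_d.+1)
    (E : 'I_d.+1 -> 'M[algC]_n) : Prop :=
  [/\ forall j, inBM R (E j),
      forall j, (E j)^T = E j,
      forall i j, E i *m E j = (if i == j then E i else 0),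
      \sum_j E j = 1%:M &
      forall j, E j != 0 /\
        (forall F, inBM R F -> F *m F = F -> F *m E j = F -> F = 0 \/ F = E j)].

Definition is_intersection_numbers n d (R : 'I_n -> 'I_n -> 'I_d.+1)
    (p : 'I_d.+1 -> 'I_d.+1 -> 'I_d.+1 -> nat) : Prop :=
  forall (i j k : 'I_d.+1) (x y : 'I_n), R x y = k ->
    #|[set z | (R x z == i) && (R z y == j)]| = p i j k.

Definition is_eigenmatrix n d (R : 'I_n -> 'I_n -> 'I_d.+1)
    (E : 'I_d.+1 -> 'M[algC]_n) (P : 'I_d.+1 -> 'I_d.+1 -> algC) : Prop :=
  forall i, adj R i = \sum_j P j i *: E j.

Definition is_dual_eigenmatrix n d (R : 'I_n -> 'I_n -> 'I_d.+1)
    (E : 'I_d.+1 -> 'M[algC]_n) (Q : 'I_d.+1 -> 'I_d.+1 -> algC) : Prop :=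
  forall i, E i = (n%:R)^-1 *: \sum_j Q j i *: adj R j.

Definition is_krein n d (E : 'I_d.+1 -> 'M[algC]_n)
    (q : 'I_d.+1 -> 'I_d.+1 -> 'I_d.+1 -> algC) : Prop :=
  forall i j, schur (E i) (E j) = (n%:R)^-1 *: \sum_k q i j k *: E k.

Definition tensor n := 'I_n -> 'I_n -> 'I_n -> algC.

Definition Delta n (L M N : 'M[algC]_n) : tensor n :=
  fun x y z => L x z * M x y * N y z.

Definition Upsilon n (L M N : 'M[algC]_n) : tensor n :=
  fun x y z => \sum_u L x u * M y u * N z u.

Definition in_Delta_span n d (R : 'I_n -> 'I_n -> 'I_d.+1) (T : tensor n) : Prop :=
  exists s : seq ('M[algC]_n * 'M[algC]_n * 'M[algC]_n * algC),
    (forall t, t \in s -> [/\ inBM R t.1.1.1, inBM R t.1.1.2 & inBM R t.1.2]) /\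
    forall x y z, T x y z = \sum_(t <- s) t.2 * Delta t.1.1.1 t.1.1.2 t.1.2 x y z.

Definition in_Upsilon_span n d (R : 'I_n -> 'I_n -> 'I_d.+1) (T : tensor n) : Prop :=
  exists s : seq ('M[algC]_n * 'M[algC]_n * 'M[algC]_n * algC),
    (forall t, t \in s -> [/\ inBM R t.1.1.1, inBM R t.1.1.2 & inBM R t.1.2]) /\
    forall x y z, T x y z = \sum_(t <- s) t.2 * Upsilon t.1.1.1 t.1.1.2 t.1.2 x y z.

Definition triply_regular n d (R : 'I_n -> 'I_n -> 'I_d.+1) : Prop :=
  forall L M N, inBM R L -> inBM R M -> inBM R N -> in_Delta_span R (Upsilon L M N).

Definition dually_triply_regular n d (R : 'I_n -> 'I_n -> 'I_d.+1) : Prop :=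
  forall L M N, inBM R L -> inBM R M -> inBM R N -> in_Upsilon_span R (Delta L M N).

Definition exactly_triply_regular n d (R : 'I_n -> 'I_n -> 'I_d.+1) : Prop :=
  triply_regular R /\ dually_triply_regular R.

(* sigma is the array of Delta-Wye parameters sigma^{i,j,k}_{r,s,t} of the scheme
   (w.r.t. the orderings given by R and E): sigma vanishes where q_{rs}^t = 0 and
   Delta(A_i,A_j,A_k) = sum_{r,s,t} sigma^{ijk}_{rst} Upsilon(E_r,E_s,E_t).
   (These are unique since the Upsilon(E_r,E_s,E_t) with q_{rs}^t>0 form a basis.) *)
Definition is_DeltaWye n d (R : 'I_n -> 'I_n -> 'I_d.+1) (E : 'I_d.+1 -> 'M[algC]_n)
    (sigma : 'I_d.+1 -> 'I_d.+1 -> 'I_d.+1 -> 'I_d.+1 -> 'I_d.+1 -> 'I_d.+1 -> algC)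
    : Prop :=
  (exists q, is_krein E q /\
     forall i j k r s t, q r s t = 0 -> sigma i j k r s t = 0) /\
  forall i j k x y z,
    Delta (adj R i) (adj R j) (adj R k) x y z =
    \sum_r \sum_s \sum_t sigma i j k r s t * Upsilon (E r) (E s) (E t) x y z.

(* Sum the Delta-Wye expansion of [Delta(A_i, A_j, A_k)] over its first index.
   On the left one gets [p_{ji}^k A_k]; on the right only the trivial idempotent
   [E_0 = J/|X|] survives, because the columns of [E_r] sum to [delta_{r0}], so
   [sigma^{ijk}_{0ss} = p_{ji}^k P_{sk}].  Summing over [j] turns [p_{ji}^k] into
   the valency [k_i], so [sigma] determines every product [k_i P_{sk}]; at
   [s = 0] this is [k_i k_k], which determines the valencies, then all
   eigenvalues, then all intersection numbers.  The dual eigenvalues and Krein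
   parameters are computed from the eigenmatrix, and [kappa] is the linear map
   between two Bose-Mesner algebras with the same structure constants. *)

From mathcomp Require Import all_boot all_order all_algebra all_field.
Set Implicit Arguments. Unset Strict Implicit. Unset Printing Implicit Defensive.
Import GRing.Theory Num.Theory.
Local Open Scope ring_scope.

Lemma ones_mx_mul n :
  (const_mx 1 : 'M[algC]_n) *m (const_mx 1 : 'M_n) = n%:R *: const_mx 1.
Proof.
apply/matrixP => x y; rewrite !mxE.
under eq_bigr do rewrite !mxE mulr1.
by rewrite sumr_const card_ord mulr1.
Qed.

Section BoseMesner.
Variables (n d : nat) (R : 'I_n -> 'I_n -> 'I_d.+1).

Lemma lincomb_adjE (c : 'I_d.+1 -> algC) x y :
  (\sum_k c k *: adj R k) x y = c (R x y).
Proof.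
rewrite summxE (bigD1 (R x y)) //= big1 ?addr0; first by rewrite !mxE eqxx mulr1.
by move=> k /negbTE nk; rewrite !mxE eq_sym nk mulr0.
Qed.

Lemma schur_lincomb_adj (a b : 'I_d.+1 -> algC) :
  schur (\sum_i a i *: adj R i) (\sum_j b j *: adj R j) =
  \sum_k (a k * b k) *: adj R k.
Proof. by apply/matrixP => x y; rewrite mxE !lincomb_adjE. Qed.

Lemma sum_adj : \sum_i adj R i = const_mx 1.
Proof.
apply/matrixP => x y; rewrite mxE -(lincomb_adjE (fun=> 1) x y).
by congr (fun_of_matrix _ x y); apply: eq_bigr => i _; rewrite scale1r.
Qed.

Lemma adj_diag i0 : (forall x y, (R x y == i0) = (x == y)) -> adj R i0 = 1%:M.
Proof. by move=> Hi0; apply/matrixP => x y; rewrite !mxE Hi0. Qed.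

Hypothesis HR : is_symm_scheme R.

Definition class_rep i := [pick xy : 'I_n * 'I_n | R xy.1 xy.2 == i].

Definition bm_coord (M : 'M[algC]_n) i :=
  if class_rep i is Some xy then M xy.1 xy.2 else 0.

Definition inter_num (i j k : 'I_d.+1) : nat :=
  if class_rep k is Some xy
  then #|[set z | (R xy.1 z == i) && (R z xy.2 == j)]| else 0.

Lemma class_repP i : exists xy, class_rep i = Some xy /\ R xy.1 xy.2 = i.
Proof.
rewrite /class_rep; case: pickP => [xy /eqP Hxy | Hnone]; first by exists xy.
case: HR => _ _ Hne _; have [x [y Hxy]] := Hne i.
by have := Hnone (x, y); rewrite /= Hxy eqxx.
Qed.

Lemma scheme_order_neq0 : (n%:R : algC) != 0.
Proof.
have [[x _] _] := class_repP ord0.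
by rewrite pnatr_eq0 -lt0n (leq_ltn_trans (leq0n x) (ltn_ord x)).
Qed.

Lemma ones_mx_neq0 : (const_mx 1 : 'M[algC]_n) != 0.
Proof.
have [[x _] _] := class_repP ord0; apply/eqP => /matrixP/(_ x x)/eqP.
by rewrite !mxE oner_eq0.
Qed.

Lemma bm_coord_lincomb c i : bm_coord (\sum_k c k *: adj R k) i = c i.
Proof. by rewrite /bm_coord; have [xy [-> <-]] := class_repP i; rewrite lincomb_adjE. Qed.

Lemma inBM_coordE M : inBM R M -> M = \sum_i bm_coord M i *: adj R i.
Proof. by move=> [c ->]; apply: eq_bigr => i _; rewrite bm_coord_lincomb. Qed.

Lemma lincomb_adj_inj c c' :
  \sum_l c l *: adj R l = \sum_l c' l *: adj R l -> c =1 c'.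
Proof. by move=> Hcc' l; rewrite -(bm_coord_lincomb c) Hcc' bm_coord_lincomb. Qed.

Lemma card_inter_num x y i j :
  #|[set z | (R x z == i) && (R z y == j)]| = inter_num i j (R x y).
Proof.
rewrite /inter_num; have [xy [-> Hxy]] := class_repP (R x y).
by case: HR => _ _ _ Hreg; apply: Hreg.
Qed.

Lemma adj_mul i j : adj R i *m adj R j = \sum_k (inter_num i j k)%:R *: adj R k.
Proof.
apply/matrixP => x y; rewrite lincomb_adjE mxE -card_inter_num -sum1_card natr_sum.
rewrite [RHS]big_mkcond /=; apply: eq_bigr => z _; rewrite !mxE inE.
by case: (R x z == i); case: (R z y == j); rewrite ?mulr1 ?mulr0.
Qed.

Lemma lincomb_adj_mul (a b : 'I_d.+1 -> algC) :
  (\sum_i a i *: adj R i) *m (\sum_j b j *: adj R j) =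
  \sum_k (\sum_i \sum_j a i * b j * (inter_num i j k)%:R) *: adj R k.
Proof.
rewrite mulmx_suml.
under eq_bigr => i _ do rewrite mulmx_sumr.
under eq_bigr => i _ do under eq_bigr => j _ do
  rewrite -scalemxAl -scalemxAr scalerA adj_mul scaler_sumr.
under [RHS]eq_bigr => k _ do rewrite scaler_suml.
under [RHS]eq_bigr => k _ do under eq_bigr => i _ do rewrite scaler_suml.
under eq_bigr => i _ do rewrite exchange_big /=.
rewrite exchange_big /=; apply: eq_bigr => k _; apply: eq_bigr => i _.
by apply: eq_bigr => j _; rewrite scalerA.
Qed.

Lemma Delta_adj_colsum i j k y z :
  \sum_x Delta (adj R i) (adj R j) (adj R k) x y z =
  ((inter_num j i k)%:R *: adj R k) y z.
Proof.
case: HR => _ Rsym _ _.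
transitivity ((adj R j *m adj R i) y z * adj R k y z).
  rewrite mxE mulr_suml; apply: eq_bigr => x _.
  by rewrite /Delta !mxE (Rsym x y) [_ * (_ == j)%:R]mulrC.
by rewrite adj_mul lincomb_adjE !mxE; case: eqP => [-> | _]; rewrite ?mulr1 ?mulr0.
Qed.

End BoseMesner.

Section Idempotents.
Variables (n d : nat) (R : 'I_n -> 'I_n -> 'I_d.+1) (E : 'I_d.+1 -> 'M[algC]_n).
Hypotheses (HR : is_symm_scheme R) (HE : prim_idem_ordering R E).

Lemma idem_coordE j : E j = \sum_i bm_coord R (E j) i *: adj R i.
Proof. by case: HE => HinBM _ _ _ _; apply: inBM_coordE. Qed.

Lemma idem_mul i j : E i *m E j = if i == j then E i else 0.
Proof. by case: HE => _ _ Horth _ _; apply: Horth. Qed.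

Lemma idem_neq0 j : E j != 0.
Proof. by case: HE => _ _ _ _ Hprim; case: (Hprim j). Qed.

Lemma idem_sym j x y : E j x y = E j y x.
Proof. by case: HE => _ Hsym _ _ _; rewrite -{1}(Hsym j) mxE. Qed.

Lemma lincomb_idem_mull (c : 'I_d.+1 -> algC) s :
  (\sum_r c r *: E r) *m E s = c s *: E s.
Proof.
rewrite mulmx_suml (bigD1 s) //= big1 ?addr0; first by rewrite -scalemxAl idem_mul eqxx.
by move=> r /negbTE nrs; rewrite -scalemxAl idem_mul nrs scaler0.
Qed.

Lemma lincomb_idem_mulr (c : 'I_d.+1 -> algC) s :
  E s *m (\sum_r c r *: E r) = c s *: E s.
Proof.
rewrite mulmx_sumr (bigD1 s) //= big1 ?addr0; first by rewrite -scalemxAr idem_mul eqxx.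
by move=> r /negbTE nrs; rewrite -scalemxAr idem_mul eq_sym nrs scaler0.
Qed.

Lemma scale_idem_inj s a b : a *: E s = b *: E s -> a = b.
Proof.
move/eqP; rewrite -subr_eq0 -scalerBl scaler_eq0 (negbTE (idem_neq0 s)) orbF.
by rewrite subr_eq0 => /eqP.
Qed.

Lemma lincomb_idem_inj c c' :
  \sum_r c r *: E r = \sum_r c' r *: E r -> c =1 c'.
Proof.
move=> Hcc' r; apply: (@scale_idem_inj r).
by rewrite -lincomb_idem_mull Hcc' lincomb_idem_mull.
Qed.

(* Row [s] holds the coordinates of [E s] in the basis [adj R]: this is
   [Q^T / |X|] in the paper's notation. *)
Definition idem_coord_mx : 'M[algC]_d.+1 := \matrix_(s, l) bm_coord R (E s) l.

Lemma lincomb_idemE (u : 'I_d.+1 -> algC) :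
  \sum_s u s *: E s = \sum_l (\sum_s u s * idem_coord_mx s l) *: adj R l.
Proof.
under eq_bigr => s _ do rewrite idem_coordE scaler_sumr.
rewrite exchange_big /=; apply: eq_bigr => l _.
by rewrite scaler_suml; apply: eq_bigr => s _; rewrite scalerA mxE.
Qed.

Lemma idem_coord_mx_unit : idem_coord_mx \in unitmx.
Proof.
rewrite unitmxE unitfE; apply/negP => /det0P [v /eqP v_neq0 vC0].
apply: v_neq0; apply/matrixP => i s; rewrite (ord1 i) mxE.
apply: (@lincomb_idem_inj (v 0) (fun=> 0)); rewrite !lincomb_idemE.
apply: eq_bigr => l _; rewrite [X in _ = X *: _]big1 => [|s' _]; last by rewrite mul0r.
by have := congr1 (fun w : 'rV_d.+1 => w 0 l) vC0; rewrite !mxE => ->.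
Qed.

(* [eigmx i s] is the eigenvalue [P_{si}] of [adj R i] on the [s]-th eigenspace. *)
Definition eigmx := invmx idem_coord_mx.

Lemma adj_eigen i : adj R i = \sum_s eigmx i s *: E s.
Proof.
have PC1 : eigmx *m idem_coord_mx = 1%:M by apply: mulVmx; apply: idem_coord_mx_unit.
rewrite lincomb_idemE (bigD1 i) //= [X in _ + X]big1 ?addr0 => [|l nli].
  have := congr1 (fun M : 'M_d.+1 => M i i) PC1.
  by rewrite !mxE eqxx => ->; rewrite scale1r.
have := congr1 (fun M : 'M_d.+1 => M i l) PC1; rewrite !mxE eq_sym (negbTE nli) => ->.
by rewrite scale0r.
Qed.

Lemma adj_mul_idem i t : adj R i *m E t = eigmx i t *: E t.
Proof. by rewrite adj_eigen lincomb_idem_mull. Qed.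

Lemma idem_mul_adj i t : E t *m adj R i = eigmx i t *: E t.
Proof. by rewrite adj_eigen lincomb_idem_mulr. Qed.

Lemma eigmx_diag i0 s :
  (forall x y, (R x y == i0) = (x == y)) -> eigmx i0 s = 1.
Proof.
move=> Hi0; apply: (@scale_idem_inj s).
by rewrite -idem_mul_adj (adj_diag Hi0) mulmx1 scale1r.
Qed.

Definition dual_eigmx : 'M[algC]_d.+1 := n%:R *: idem_coord_mx^T.

Lemma idem_dual_eigen i : E i = n%:R^-1 *: \sum_j dual_eigmx j i *: adj R j.
Proof.
rewrite {1}idem_coordE scaler_sumr; apply: eq_bigr => j _.
by rewrite !mxE scalerA mulrA mulVf ?mul1r // (scheme_order_neq0 HR).
Qed.

Definition krein_param i j k :=
  n%:R * \sum_a idem_coord_mx i a * idem_coord_mx j a * eigmx a k.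

Lemma krein_paramP : is_krein E krein_param.
Proof.
move=> i j; rewrite (idem_coordE i) (idem_coordE j) schur_lincomb_adj.
under eq_bigr do rewrite adj_eigen scaler_sumr.
rewrite exchange_big scaler_sumr; apply: eq_bigr => k _.
rewrite scalerA /krein_param mulrA mulVf ?mul1r ?(scheme_order_neq0 HR) // scaler_suml.
by apply: eq_bigr => a _; rewrite !scalerA !mxE.
Qed.

Definition ones_eigval t := \sum_i eigmx i t.

Lemma ones_mul_idem t : const_mx 1 *m E t = ones_eigval t *: E t.
Proof.
rewrite -(sum_adj R) mulmx_suml scaler_suml.
by apply: eq_bigr => i _; apply: adj_mul_idem.
Qed.

Lemma ones_eigen : const_mx 1 = \sum_t ones_eigval t *: E t.
Proof.
case: HE => _ _ _ sumE1 _; rewrite -[LHS]mulmx1 -sumE1 mulmx_sumr.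
by apply: eq_bigr => t _; rewrite ones_mul_idem.
Qed.

Lemma ones_eigval_0n t : ones_eigval t = 0 \/ ones_eigval t = n%:R.
Proof.
have H : (ones_eigval t * ones_eigval t) *: E t = (n%:R * ones_eigval t) *: E t.
  rewrite -scalerA -ones_mul_idem scalemxAr -ones_mul_idem mulmxA ones_mx_mul.
  by rewrite -scalemxAl ones_mul_idem scalerA.
have /eqP := scale_idem_inj H; rewrite -subr_eq0 -mulrBl mulf_eq0 subr_eq0.
by case/orP => /eqP ->; [right | left].
Qed.

Lemma idem_scaled_ones t a : E t = a *: const_mx 1 -> a = n%:R^-1.
Proof.
move=> Eta; have [[x0 _] _] := class_repP HR ord0.
have a_neq0 : a != 0 by apply: contraNneq (idem_neq0 t) => a0; rewrite Eta a0 scale0r.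
have := idem_mul t t; rewrite eqxx Eta -scalemxAl -scalemxAr ones_mx_mul !scalerA.
move=> /matrixP/(_ x0 x0); rewrite !mxE !mulr1 -mulrA => Hx0.
have an1 : a * n%:R = 1 by apply: (mulfI a_neq0); rewrite mulr1 Hx0.
by apply: (mulIf (scheme_order_neq0 HR)); rewrite an1 mulVf // (scheme_order_neq0 HR).
Qed.

(* Every entry in column [u] of [J *m E t] is the [u]-th column sum of [E t],
   so [J *m E t = n *: E t] makes [E t] constant along columns, hence, being
   symmetric, constant. *)
Lemma idem_ones t : ones_eigval t = n%:R -> E t = n%:R^-1 *: const_mx 1.
Proof.
move=> Ht; have [[x0 _] _] := class_repP HR ord0.
have Hcol x u : E t x u = E t x0 u.
  have col y : n%:R * E t y u = \sum_z E t z u.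
    have := congr1 (fun M : 'M_n => M y u) (ones_mul_idem t).
    by rewrite Ht !mxE => <-; apply: eq_bigr => z _; rewrite !mxE mul1r.
  by apply: (mulfI (scheme_order_neq0 HR)); rewrite !col.
suff Eta : E t = E t x0 x0 *: const_mx 1 by rewrite Eta -(idem_scaled_ones Eta).
by apply/matrixP => x u; rewrite !mxE mulr1 Hcol idem_sym Hcol.
Qed.

Lemma trivial_idem_exists : exists e0, E e0 = n%:R^-1 *: const_mx 1.
Proof.
have [/existsP [e0 He0] | /existsPn Hall] := boolP [exists t, ones_eigval t != 0].
  by exists e0; apply: idem_ones; case: (ones_eigval_0n e0) He0 => // ->; rewrite eqxx.
have := ones_mx_neq0 HR; rewrite ones_eigen big1 ?eqxx // => t _.
by move: (Hall t); rewrite negbK => /eqP ->; rewrite scale0r.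
Qed.

End Idempotents.

Section TrivialIdempotent.
Variables (n d : nat) (R : 'I_n -> 'I_n -> 'I_d.+1) (E : 'I_d.+1 -> 'M[algC]_n).
Hypotheses (HR : is_symm_scheme R) (HE : prim_idem_ordering R E).
Variable e0 : 'I_d.+1.
Hypothesis He0 : E e0 = n%:R^-1 *: const_mx 1.

Let n_neq0 := scheme_order_neq0 HR.

Lemma ones_trivial_idem : const_mx 1 = n%:R *: E e0.
Proof. by rewrite He0 scalerA mulfV // scale1r. Qed.

Lemma ones_eigval_nontrivial t : t != e0 -> ones_eigval R E t = 0.
Proof.
move=> nte0; apply: (@scale_idem_inj _ _ _ _ HE t); rewrite scale0r -ones_mul_idem //.
by rewrite ones_trivial_idem -scalemxAl (idem_mul HE) eq_sym (negbTE nte0) scaler0.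
Qed.

Lemma ones_eigval_trivial : ones_eigval R E e0 = n%:R.
Proof.
apply: (@scale_idem_inj _ _ _ _ HE e0); rewrite -ones_mul_idem // -ones_trivial_idem.
by rewrite He0 -scalemxAr ones_mx_mul scalerA mulVf // scale1r.
Qed.

Lemma idem_colsum t u : \sum_x E t x u = (t == e0)%:R.
Proof.
have [-> | nte0] := eqVneq t e0.
  rewrite He0; under eq_bigr do rewrite !mxE mulr1.
  by rewrite sumr_const card_ord -[_ *+ n]mulr_natr mulVf.
have [[x0 _] _] := class_repP HR ord0.
have := congr1 (fun M : 'M_n => M x0 u) (ones_mul_idem HR HE t).
rewrite ones_eigval_nontrivial // scale0r !mxE => Hsum.
by apply: etrans Hsum; apply: eq_bigr => x _; rewrite mxE mul1r.
Qed.

Lemma eigmx_valency y k : eigmx R E k e0 = #|[set z | R y z == k]|%:R.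
Proof.
have := congr1 (fun M : 'M_n => M y y) (adj_mul_idem HR HE k e0).
rewrite He0 !mxE mulr1 => Hyy; apply: (mulIf (invr_neq0 n_neq0)); rewrite -Hyy.
rewrite -sum1_card natr_sum mulr_suml [RHS]big_mkcond; apply: eq_bigr => z _.
by rewrite !mxE inE; case: (R y z == k); rewrite ?mul1r ?mul0r ?mulr1.
Qed.

Lemma eigmx_valency_neq0 k : eigmx R E k e0 != 0.
Proof.
have [[x y] [_ Hxy]] := class_repP HR k; rewrite (eigmx_valency x) pnatr_eq0.
by rewrite -lt0n card_gt0; apply/set0Pn; exists y; rewrite inE Hxy.
Qed.

Lemma sum_inter_num i k : \sum_j (inter_num R j i k)%:R = eigmx R E i e0.
Proof.
move: k; apply: (lincomb_adj_inj HR).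
transitivity ((const_mx 1 : 'M_n) *m adj R i).
  rewrite -(sum_adj R) mulmx_suml; under [RHS]eq_bigr do rewrite (adj_mul HR).
  by rewrite exchange_big /=; apply: eq_bigr => l _; rewrite scaler_suml.
rewrite ones_trivial_idem -scalemxAl (idem_mul_adj HR HE) He0 !scalerA.
by rewrite mulrAC mulfV // mul1r -(sum_adj R) scaler_sumr.
Qed.

Lemma krein_trivial q : is_krein E q -> forall r t, q r e0 t = (r == t)%:R.
Proof.
move=> Hq r t; apply: (@scale_idem_inj _ _ _ _ HE t).
have Hschur : schur (E r) (E e0) = n%:R^-1 *: E r.
  by apply/matrixP => x y; rewrite He0 !mxE mulr1 mulrC.
have := congr1 (fun M => (n%:R *: M) *m E t) (Hq r e0).
rewrite Hschur !scalerA mulfV // !scale1r (lincomb_idem_mull HE) => <-.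
by rewrite (idem_mul HE); case: eqP => [-> | _]; rewrite ?scale1r ?scale0r.
Qed.

Lemma Upsilon_colsum r s t y z :
  \sum_x Upsilon (E r) (E s) (E t) x y z = (r == e0)%:R * ((s == t)%:R * E s y z).
Proof.
rewrite /Upsilon exchange_big /=.
transitivity ((r == e0)%:R * (E s *m E t) y z).
  rewrite mxE mulr_sumr; apply: eq_bigr => u _.
  rewrite -(idem_colsum r u) mulr_suml; apply: eq_bigr => x _.
  by rewrite (idem_sym HE t z u) mulrA.
by rewrite (idem_mul HE); case: (s =P t) => [-> | _]; rewrite ?mxE ?mul1r ?mul0r.
Qed.

Lemma DeltaWye_contract sigma : is_DeltaWye R E sigma ->
  forall i j k s, sigma i j k e0 s s = (inter_num R j i k)%:R * eigmx R E k s.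
Proof.
move=> [_ HDW] i j k.
apply: (lincomb_idem_inj HE).
suff -> : \sum_s sigma i j k e0 s s *: E s = (inter_num R j i k)%:R *: adj R k.
  by rewrite (adj_eigen HR HE) scaler_sumr; apply: eq_bigr => s _; rewrite scalerA.
apply/matrixP => y z; rewrite -Delta_adj_colsum // summxE.
under [RHS]eq_bigr do rewrite HDW.
rewrite exchange_big /=.
under [RHS]eq_bigr => r _ do (rewrite exchange_big /=;
  under eq_bigr => s _ do (rewrite exchange_big /=;
    under eq_bigr => t _ do rewrite -mulr_sumr Upsilon_colsum)).
rewrite [RHS](bigD1 e0) //= [X in _ + X]big1 ?addr0 => [|r /negbTE nre0]; last first.
  by apply: big1 => s _; apply: big1 => t _; rewrite nre0 mul0r mulr0.
apply: eq_bigr => s _; rewrite (bigD1 s) //= [X in _ + X]big1 ?addr0.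
  by rewrite !eqxx !mul1r mxE.
by move=> t; rewrite eq_sym => /negbTE ->; rewrite mul0r !mulr0.
Qed.

End TrivialIdempotent.

Section SameDeltaWye.
Variables (n m d : nat) (R : 'I_n -> 'I_n -> 'I_d.+1) (S : 'I_m -> 'I_m -> 'I_d.+1).
Variables (E : 'I_d.+1 -> 'M[algC]_n) (E' : 'I_d.+1 -> 'M[algC]_m).
Variable sigma : 'I_d.+1 -> 'I_d.+1 -> 'I_d.+1 -> 'I_d.+1 -> 'I_d.+1 -> 'I_d.+1 -> algC.
Hypotheses (HR : is_symm_scheme R) (HS : is_symm_scheme S).
Hypotheses (HE : prim_idem_ordering R E) (HE' : prim_idem_ordering S E').
Hypotheses (DWR : is_DeltaWye R E sigma) (DWS : is_DeltaWye S E' sigma).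

(* If [e0 <> f0] then [q'_{e0 f0}^{f0} = 0] in [Y], so [sigma^{i0 j i0}_{e0 f0 f0}]
   vanishes for all [j]; in [X] these sum over [j] to the valency [1] of the
   diagonal relation [i0]. *)
Lemma trivial_idem_index_eq e0 f0 :
  E e0 = n%:R^-1 *: const_mx 1 -> E' f0 = m%:R^-1 *: const_mx 1 -> e0 = f0.
Proof.
move=> He0 Hf0; apply/eqP/negPn/negP => ne0f0.
have [[q' [Hq' Hsupp]] _] := DWS.
have [[i0 Hi0] _ _ _] := HR.
apply: (negP (eigmx_valency_neq0 HR HE He0 i0)); apply/eqP.
rewrite -(sum_inter_num HR HE He0 i0 i0) big1 // => j _.
have := DeltaWye_contract HR HE He0 DWR i0 j i0 f0.
rewrite (eigmx_diag HR HE _ Hi0) mulr1 Hsupp // (krein_trivial HS HE' Hf0 Hq').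
by rewrite (negbTE ne0f0).
Qed.

Variable e0 : 'I_d.+1.
Hypotheses (He0 : E e0 = n%:R^-1 *: const_mx 1) (He0' : E' e0 = m%:R^-1 *: const_mx 1).

Lemma valency_eigmx_eq i k s :
  eigmx R E i e0 * eigmx R E k s = eigmx S E' i e0 * eigmx S E' k s.
Proof.
rewrite -(sum_inter_num HR HE He0 i k) -(sum_inter_num HS HE' He0' i k) !mulr_suml.
apply: eq_bigr => j _.
by rewrite -(DeltaWye_contract HR HE He0 DWR) -(DeltaWye_contract HS HE' He0' DWS).
Qed.

Lemma valency_eq k : eigmx R E k e0 = eigmx S E' k e0.
Proof.
have [[x _] _] := class_repP HR ord0; have [[x' _] _] := class_repP HS ord0.
have := valency_eigmx_eq k k e0.
rewrite (eigmx_valency HR HE He0 x) (eigmx_valency HS HE' He0' x') -!natrM.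
by move/eqP; rewrite eqr_nat eqn_sqr => /eqP ->.
Qed.

Lemma eigmx_eq : eigmx R E = eigmx S E'.
Proof.
apply/matrixP => k s; apply: (mulfI (eigmx_valency_neq0 HS HE' He0' k)).
by rewrite -{1}valency_eq valency_eigmx_eq.
Qed.

Lemma inter_num_eq i j k : inter_num R i j k = inter_num S i j k.
Proof.
apply/eqP; rewrite -(eqr_nat algC); apply/eqP.
apply: (mulIf (eigmx_valency_neq0 HS HE' He0' k)).
rewrite -(DeltaWye_contract HS HE' He0' DWS) -eigmx_eq.
by rewrite -(DeltaWye_contract HR HE He0 DWR).
Qed.

Lemma scheme_order_eq : n%:R = m%:R :> algC.
Proof.
rewrite -(ones_eigval_trivial HR HE He0) -(ones_eigval_trivial HS HE' He0').
by rewrite /ones_eigval eigmx_eq.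
Qed.

Lemma idem_coord_mx_eq : idem_coord_mx R E = idem_coord_mx S E'.
Proof.
rewrite -(invmxK (idem_coord_mx R E)) -(invmxK (idem_coord_mx S E')).
by rewrite -!/(eigmx _ _) eigmx_eq.
Qed.

Lemma dual_eigmx_eq : dual_eigmx R E = dual_eigmx S E'.
Proof. by rewrite /dual_eigmx scheme_order_eq idem_coord_mx_eq. Qed.

Lemma krein_param_eq : krein_param R E = krein_param S E'.
Proof. by rewrite /krein_param scheme_order_eq idem_coord_mx_eq eigmx_eq. Qed.

End SameDeltaWye.

Section BoseMesnerTransfer.
Variables (n m d : nat) (R : 'I_n -> 'I_n -> 'I_d.+1) (S : 'I_m -> 'I_m -> 'I_d.+1).
Hypotheses (HR : is_symm_scheme R) (HS : is_symm_scheme S).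

Definition bm_transfer (M : 'M[algC]_n) := \sum_i bm_coord R M i *: adj S i.

Lemma bm_transfer_lincomb c :
  bm_transfer (\sum_i c i *: adj R i) = \sum_i c i *: adj S i.
Proof. by apply: eq_bigr => i _; rewrite (bm_coord_lincomb HR). Qed.

Lemma bm_transfer_schur M N : inBM R M -> inBM R N ->
  bm_transfer (schur M N) = schur (bm_transfer M) (bm_transfer N).
Proof.
move=> /(inBM_coordE HR) -> /(inBM_coordE HR) ->.
by rewrite (schur_lincomb_adj R) !bm_transfer_lincomb (schur_lincomb_adj S).
Qed.

Lemma bm_transfer_mul M N :
  (forall i j k, inter_num R i j k = inter_num S i j k) ->
  inBM R M -> inBM R N -> bm_transfer (M *m N) = bm_transfer M *m bm_transfer N.
Proof.
move=> Hp /(inBM_coordE HR) -> /(inBM_coordE HR) ->.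
rewrite (lincomb_adj_mul HR) !bm_transfer_lincomb (lincomb_adj_mul HS).
by apply: eq_bigr => k _; under eq_bigr do under eq_bigr do rewrite Hp.
Qed.

End BoseMesnerTransfer.

Theorem mainTheorem4 (n m d : nat)
    (R : 'I_n -> 'I_n -> 'I_d.+1) (S : 'I_m -> 'I_m -> 'I_d.+1)
    (E : 'I_d.+1 -> 'M[algC]_n) (E' : 'I_d.+1 -> 'M[algC]_m) :
  is_symm_scheme R -> is_symm_scheme S ->
  exactly_triply_regular R -> exactly_triply_regular S ->
  prim_idem_ordering R E -> prim_idem_ordering S E' ->
  (exists sigma, is_DeltaWye R E sigma /\ is_DeltaWye S E' sigma) ->
  [/\ exists p, is_intersection_numbers R p /\ is_intersection_numbers S p,
      exists P, is_eigenmatrix R E P /\ is_eigenmatrix S E' P,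
      exists Q, is_dual_eigenmatrix R E Q /\ is_dual_eigenmatrix S E' Q,
      exists q, is_krein E q /\ is_krein E' q &
      exists kappa : 'M[algC]_n -> 'M[algC]_m,
        [/\ forall c : 'I_d.+1 -> algC,
              kappa (\sum_i c i *: adj R i) = \sum_i c i *: adj S i,
            forall M N, inBM R M -> inBM R N ->
              kappa (M *m N) = kappa M *m kappa N /\
              kappa (schur M N) = schur (kappa M) (kappa N) &
            forall j, kappa (E j) = E' j]].
Proof.
(* Triple regularity only serves to make sigma exist, which is assumed here. *)
move=> HR HS _ _ HE HE' [sigma [DWR DWS]].
have [e0 He0] := trivial_idem_exists HR HE.
have [f0 He0'] := trivial_idem_exists HS HE'.
have e0f0 := trivial_idem_index_eq HR HS HE HE' DWR DWS He0 He0'; subst f0.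
have Hp := inter_num_eq HR HS HE HE' DWR DWS He0 He0'.
have Heig := eigmx_eq HR HS HE HE' DWR DWS He0 He0'.
have Hcoord := idem_coord_mx_eq HR HS HE HE' DWR DWS He0 He0'.
split.
- exists (inter_num R); split=> i j k x y <-; first exact: card_inter_num.
  by rewrite (card_inter_num HS) Hp.
- exists (fun j i => eigmx R E i j); split=> i; first exact: adj_eigen.
  by rewrite Heig; apply: adj_eigen.
- exists (dual_eigmx R E); split; first exact: idem_dual_eigen.
  by rewrite (dual_eigmx_eq HR HS HE HE' DWR DWS He0 He0'); apply: idem_dual_eigen.
- exists (krein_param R E); split; first exact: krein_paramP.
  by rewrite (krein_param_eq HR HS HE HE' DWR DWS He0 He0'); apply: krein_paramP.
- exists (bm_transfer R S); split.
  + exact: bm_transfer_lincomb.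
  + by move=> M N HM HN; rewrite bm_transfer_mul // bm_transfer_schur.
  + move=> j; rewrite /bm_transfer (idem_coordE HS HE' j).
    by apply: eq_bigr => i _; move/matrixP/(_ j i): Hcoord; rewrite !mxE => ->.
Qed.
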